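(* Let $\gamma\in(1,3)$ and $\mu\in(0,1)$. At the point $C=(U_C,H_C)=\big(\frac{2\mu}{\gamma+1},(\frac{\gamma-1}{\gamma+1})^2\mu^2\big)$, where $F=G=0$, the quadratic equation for the slope $s=\frac{dH}{dU}$ of integral curves of $\frac{dH}{dU}=\frac{F(H,U)}{G(H,U)}$, \[ G_H\,s^2+(G_U-F_H)\,s-F_U=0\quad\text{(coefficients evaluated at }C), \] i.e. $s=\frac{F_H-G_U\pm\sqrt{(G_U-F_H)^2+4F_UG_H}}{2G_H}$, has two distinct real roots; that is, there are two distinct branches of integral curves at $C$.
   Context: Set $k_1=\frac{(\gamma+1)+\mu(3-\gamma)}{2}$, $k_2=\frac{2(1-\mu)}{\gamma-1}$, $F(H,U)=2H[H-(U^2-k_1U+\mu)]$, $G(H,U)=H(U+k_2)-U(U-1)(U-\mu)$. The partial derivatives are $F_H=4H-2(U^2-k_1U+\mu)$, $F_U=-2H(2U-k_1)$, $G_H=U+k_2$, $G_U=H-3U^2+2(1+\mu)U-\mu$. *)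

From mathcomp Require Import all_boot all_order all_algebra.
Set Implicit Arguments. Unset Strict Implicit. Unset Printing Implicit Defensive.
Import Order.TTheory GRing.Theory Num.Theory.
Local Open Scope ring_scope.

Section Defs.
Variable R : realFieldType.
Variables gamma mu : R.

Definition k1 : R := ((gamma + 1) + mu * (3 - gamma)) / 2.
Definition k2 : R := 2 * (1 - mu) / (gamma - 1).

Definition Ffun (H U : R) : R := 2 * H * (H - (U ^+ 2 - k1 * U + mu)).
Definition Gfun (H U : R) : R := H * (U + k2) - U * (U - 1) * (U - mu).

Definition F_H (H U : R) : R := 4 * H - 2 * (U ^+ 2 - k1 * U + mu).
Definition F_U (H U : R) : R := - 2 * H * (2 * U - k1).
Definition G_H (H U : R) : R := U + k2.
Definition G_U (H U : R) : R := H - 3 * U ^+ 2 + 2 * (1 + mu) * U - mu.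

Definition U_C : R := 2 * mu / (gamma + 1).
Definition H_C : R := ((gamma - 1) / (gamma + 1)) ^+ 2 * mu ^+ 2.

Definition slope_quad (s : R) : R :=
  G_H H_C U_C * s ^+ 2 + (G_U H_C U_C - F_H H_C U_C) * s - F_U H_C U_C.
End Defs.

(* C is a saddle of the slope field: at C both G_H and F_U are positive, so the
   product -F_U/G_H of the roots of the slope quadratic is negative.  Over an
   arbitrary real field there is no square root, so one root,
   mu (gamma - 1)^2 / (gamma + 1), is exhibited and the other is obtained from
   the sum of the roots; the two have opposite signs. *)
From mathcomp Require Import all_boot all_order all_algebra.
From mathcomp Require Import ring lra.
Set Implicit Arguments. Unset Strict Implicit. Unset Printing Implicit Defensive.
Import Order.TTheory GRing.Theory Num.Theory.
Local Open Scope ring_scope.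

Lemma quadratic_other_root (F : fieldType) (a b c s : F) :
  a != 0 -> a * s ^+ 2 + b * s - c = 0 ->
  a * (- b / a - s) ^+ 2 + b * (- b / a - s) - c = 0.
Proof.
move=> a_neq0 /eqP; rewrite subr_eq0 => /eqP <-.
by field.
Qed.

Lemma quadratic_other_root_neq (R : realFieldType) (a b c s : R) :
  0 < a -> 0 < c -> a * s ^+ 2 + b * s - c = 0 -> s != - b / a - s.
Proof.
move=> a_gt0 c_gt0 root_s; apply/eqP => s_eq.
have prod_roots : a * s * (- b / a - s) = - c.
  move/eqP: root_s; rewrite subr_eq0 => /eqP <-.
  by field; rewrite lt0r_neq0.
have : 0 <= a * s * s by rewrite -mulrA -expr2 mulr_ge0 ?sqr_ge0 ?(ltW a_gt0).
by rewrite {2}s_eq prod_roots oppr_ge0 leNgt c_gt0.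
Qed.

Lemma quadratic_two_roots (R : realFieldType) (a b c s : R) :
  0 < a -> 0 < c -> a * s ^+ 2 + b * s - c = 0 ->
  exists s1 s2 : R, [/\ s1 != s2,
    a * s1 ^+ 2 + b * s1 - c = 0 & a * s2 ^+ 2 + b * s2 - c = 0].
Proof.
move=> a_gt0 c_gt0 root_s; exists s, (- b / a - s); split => //.
- exact: quadratic_other_root_neq a_gt0 c_gt0 root_s.
- by apply: quadratic_other_root; rewrite // lt0r_neq0.
Qed.

Section PointC.
Variables (R : realFieldType) (gamma mu : R).

Local Notation UC := (U_C gamma mu).
Local Notation HC := (H_C gamma mu).

Lemma Ffun_C : gamma + 1 != 0 -> Ffun gamma mu HC UC = 0.
Proof. by move=> gp1; rewrite /Ffun /H_C /U_C /k1; field. Qed.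

Lemma Gfun_C : gamma + 1 != 0 -> gamma - 1 != 0 -> Gfun gamma mu HC UC = 0.
Proof. by move=> gp1 gm1; rewrite /Gfun /H_C /U_C /k2; field; rewrite gp1 gm1. Qed.

Lemma slope_quad_root : gamma + 1 != 0 -> gamma - 1 != 0 ->
  slope_quad gamma mu (mu * (gamma - 1) ^+ 2 / (gamma + 1)) = 0.
Proof.
move=> gp1 gm1.
rewrite /slope_quad /G_H /G_U /F_H /F_U /H_C /U_C /k1 /k2.
by field; rewrite gp1 gm1.
Qed.

Lemma G_H_C_gt0 : 1 < gamma -> mu < 1 -> 0 < G_H gamma mu HC UC.
Proof.
move=> gamma_gt1 mu_lt1.
have -> : G_H gamma mu HC UC =
    2 * (gamma + 1 - 2 * mu) / ((gamma + 1) * (gamma - 1)).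
  by rewrite /G_H /U_C /k2; field; rewrite !lt0r_neq0 //; lra.
by apply: divr_gt0; [lra | apply: mulr_gt0; lra].
Qed.

Lemma H_C_gt0 : 1 < gamma -> 0 < mu -> 0 < HC.
Proof.
move=> gamma_gt1 mu_gt0.
by rewrite /H_C mulr_gt0 ?exprn_gt0 // divr_gt0 //; lra.
Qed.

Lemma F_U_C_gt0 : 1 < gamma -> 0 < mu -> mu < 1 -> 0 < F_U gamma mu HC UC.
Proof.
move=> gamma_gt1 mu_gt0 mu_lt1.
have -> : F_U gamma mu HC UC =
    HC * ((gamma + 1) ^+ 2 - mu * (gamma ^+ 2 - 2 * gamma + 5)) / (gamma + 1).
  by rewrite /F_U /U_C /k1; field; rewrite lt0r_neq0 //; lra.
(* mu < 1 bounds the middle factor below by 4 (gamma - 1) *)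
apply: divr_gt0; last lra.
by apply: mulr_gt0; [exact: H_C_gt0 | nra].
Qed.

End PointC.

Theorem lemma3p3 (R : realFieldType) (gamma mu : R) :
  1 < gamma < 3 -> 0 < mu < 1 ->
  [/\ Ffun gamma mu (H_C gamma mu) (U_C gamma mu) = 0,
      Gfun gamma mu (H_C gamma mu) (U_C gamma mu) = 0,
      G_H gamma mu (H_C gamma mu) (U_C gamma mu) != 0 &
      exists s1 s2 : R, [/\ s1 != s2,
        slope_quad gamma mu s1 = 0 & slope_quad gamma mu s2 = 0]].
Proof.
move=> /andP[gamma_gt1 _] /andP[mu_gt0 mu_lt1].
have gp1 : gamma + 1 != 0 by rewrite lt0r_neq0 //; lra.
have gm1 : gamma - 1 != 0 by rewrite lt0r_neq0 //; lra.
have GH_gt0 := G_H_C_gt0 gamma_gt1 mu_lt1.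
split; [exact: Ffun_C | exact: Gfun_C | by rewrite lt0r_neq0 |].
have := slope_quad_root mu gp1 gm1; rewrite /slope_quad => root.
exact: quadratic_two_roots GH_gt0 (F_U_C_gt0 gamma_gt1 mu_gt0 mu_lt1) root.
Qed.
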